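(* Let $n\neq 1$ be a real number, $k_n=n-1$, and $k_0,k_1,k_2\in\mathbb{R}$. On the phase space with canonical coordinates $(r,\phi,p_r,p_\phi)$, $r>0$, restricted to the open set where $\cos(k_n\phi)\neq 0$, consider $$H_{nc2}=\tfrac12 r^{2n}\Big(p_r^2+\tfrac{p_\phi^2}{r^2}\Big)+k_0r^{n-1}+r^{2k_n}\Big(\frac{k_1}{\cos^2(k_n\phi)}+k_2\frac{\sin(k_n\phi)}{\cos^2(k_n\phi)}\Big).$$ With $P_1=r^n\big(p_r\cos(k_n\phi)+\tfrac1r p_\phi\sin(k_n\phi)\big)$, the functions $$J_{c2}=p_\phi^2+2\Big(\frac{k_1}{\cos^2(k_n\phi)}+k_2\frac{\sin(k_n\phi)}{\cos^2(k_n\phi)}\Big),$$ $$J_{c3}=P_1p_\phi+k_0\sin(k_n\phi)+2k_1r^{k_n}\sec(k_n\phi)\tan(k_n\phi)+k_2r^{k_n}\big(\sec^2(k_n\phi)+\tan^2(k_n\phi)\big)$$ are constants of motion of $H_{nc2}$, i.e. $\{J_{c2},H_{nc2}\}=0$ and $\{J_{c3},H_{nc2}\}=0$; hence $H_{nc2}$ is superintegrable.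
   Context: The Poisson bracket is the canonical one in $(r,\phi,p_r,p_\phi)$. A constant of motion of $H$ is a function $F$ with $\{F,H\}=0$. *)

From Stdlib Require Import Reals.
From Coquelicot Require Import Coquelicot.
Open Scope R_scope.

Definition PhaseFun := R -> R -> R -> R -> R.

Definition d_r (F : PhaseFun) r ph pr pph := Derive (fun t => F t ph pr pph) r.
Definition d_phi (F : PhaseFun) r ph pr pph := Derive (fun t => F r t pr pph) ph.
Definition d_pr (F : PhaseFun) r ph pr pph := Derive (fun t => F r ph t pph) pr.
Definition d_pphi (F : PhaseFun) r ph pr pph := Derive (fun t => F r ph pr t) pph.

Definition poisson (F G : PhaseFun) : PhaseFun := fun r ph pr pph =>
  d_r F r ph pr pph * d_pr G r ph pr pph - d_pr F r ph pr pph * d_r G r ph pr pph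
  + d_phi F r ph pr pph * d_pphi G r ph pr pph - d_pphi F r ph pr pph * d_phi G r ph pr pph.

(* r^a for r > 0 and real exponent a *)
Definition rpow (r a : R) : R := Rpower r a.

Definition V2 (k1 k2 kn ph : R) : R :=
  k1 / (cos (kn * ph))^2 + k2 * sin (kn * ph) / (cos (kn * ph))^2.

Definition H_nc2 (n k0 k1 k2 : R) : PhaseFun := fun r ph pr pph =>
  / 2 * rpow r (2 * n) * (pr ^ 2 + pph ^ 2 / r ^ 2)
  + k0 * rpow r (n - 1)
  + rpow r (2 * (n - 1)) * V2 k1 k2 (n - 1) ph.

Definition P1 (n : R) : PhaseFun := fun r ph pr pph =>
  rpow r n * (pr * cos ((n - 1) * ph) + / r * pph * sin ((n - 1) * ph)).

Definition J_c2 (n k1 k2 : R) : PhaseFun := fun r ph pr pph =>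
  pph ^ 2 + 2 * V2 k1 k2 (n - 1) ph.

Definition J_c3 (n k0 k1 k2 : R) : PhaseFun := fun r ph pr pph =>
  let kn := n - 1 in
  P1 n r ph pr pph * pph + k0 * sin (kn * ph)
  + 2 * k1 * rpow r kn * (/ cos (kn * ph)) * tan (kn * ph)
  + k2 * rpow r kn * ((/ cos (kn * ph)) ^ 2 + (tan (kn * ph)) ^ 2).

(* Write A = r^(n-1), c = cos((n-1) phi), s = sin((n-1) phi).  Since r^(2n) = A^2 r^2,
   H = A^2 (r^2 p_r^2 + p_phi^2)/2 + k0 A + A^2 V with V = (k1 + k2 s)/c^2, and J_c2 = p_phi^2 + 2V
   depends only on (phi, p_phi); the two phi-p_phi terms of {J_c2, H} are then both
   2 A^2 p_phi dV/dphi and cancel.  For J_c3 one computes the eight partial derivatives in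
   closed form: {J_c3, H} becomes a rational expression in (A, r, c, s, p_r, p_phi) whose
   numerator is a multiple of s^2 + c^2 - 1. *)
From Stdlib Require Import Reals Lra.
From Coquelicot Require Import Coquelicot.
Open Scope R_scope.

Section RealPowers.
Variables a r : R.
Hypothesis r_pos : 0 < r.

Lemma exp_ln_double : exp (2 * a * ln r) = exp (a * ln r) ^ 2.
Proof.
  replace (2 * a * ln r) with (a * ln r + a * ln r) by ring.
  rewrite exp_plus; ring.
Qed.

Lemma exp_ln_succ : exp (a * ln r) = exp ((a - 1) * ln r) * r.
Proof.
  replace (a * ln r) with ((a - 1) * ln r + ln r) by ring.
  rewrite exp_plus, exp_ln; auto.
Qed.

Lemma exp_ln_double_succ : exp (2 * a * ln r) = exp ((a - 1) * ln r) ^ 2 * r ^ 2.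
Proof. rewrite exp_ln_double, exp_ln_succ; ring. Qed.

End RealPowers.

Section PartialDerivatives.
Variables n k0 k1 k2 r ph pr pph : R.
Hypothesis r_pos : 0 < r.
Hypothesis cos_neq0 : cos ((n - 1) * ph) <> 0.

Let A := exp ((n - 1) * ln r).
Let c := cos ((n - 1) * ph).
Let s := sin ((n - 1) * ph).
Let k := n - 1.
Let W := 2 * k1 * s + k2 * (1 + s ^ 2).

Ltac side_conditions :=
  repeat split; auto;
  repeat apply Rmult_integral_contrapositive_currified; try lra; auto.

(* auto_derive leaves r^(2n), r^(2(n-1)), r^n as exponentials: express them through A. *)
Ltac closed_form :=
  apply is_derive_unique; auto_derive;
  [ side_conditions
  | unfold W, A, c, s, k;
    try rewrite (exp_ln_double_succ n r); try rewrite (exp_ln_double (n - 1) r);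
    try rewrite (exp_ln_succ n r); auto;
    field; side_conditions ].

Lemma d_r_H_nc2 : d_r (H_nc2 n k0 k1 k2) r ph pr pph =
  n * A^2 * r * pr^2 + k * A^2 * pph^2 / r + k0 * k * A / r
  + 2 * k * A^2 * (k1 + k2 * s) / c^2 / r.
Proof. unfold d_r, H_nc2, rpow, Rpower, V2; closed_form. Qed.

Lemma d_pr_H_nc2 : d_pr (H_nc2 n k0 k1 k2) r ph pr pph = A^2 * r^2 * pr.
Proof. unfold d_pr, H_nc2, rpow, Rpower, V2; closed_form. Qed.

Lemma d_pphi_H_nc2 : d_pphi (H_nc2 n k0 k1 k2) r ph pr pph = A^2 * pph.
Proof. unfold d_pphi, H_nc2, rpow, Rpower, V2; closed_form. Qed.

Lemma d_phi_H_nc2 : d_phi (H_nc2 n k0 k1 k2) r ph pr pph =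
  A^2 * k * (k2 * c^2 + 2 * s * (k1 + k2 * s)) / c^3.
Proof. unfold d_phi, H_nc2, rpow, Rpower, V2; closed_form. Qed.

Lemma d_r_J_c2 : d_r (J_c2 n k1 k2) r ph pr pph = 0.
Proof. unfold d_r, J_c2; apply Derive_const. Qed.

Lemma d_pr_J_c2 : d_pr (J_c2 n k1 k2) r ph pr pph = 0.
Proof. unfold d_pr, J_c2; apply Derive_const. Qed.

Lemma d_pphi_J_c2 : d_pphi (J_c2 n k1 k2) r ph pr pph = 2 * pph.
Proof. unfold d_pphi, J_c2, V2; closed_form. Qed.

Lemma d_phi_J_c2 : d_phi (J_c2 n k1 k2) r ph pr pph =
  2 * k * (k2 * c^2 + 2 * s * (k1 + k2 * s)) / c^3.
Proof. unfold d_phi, J_c2, V2; closed_form. Qed.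

Lemma d_r_J_c3 : d_r (J_c3 n k0 k1 k2) r ph pr pph =
  k * A / r * (r * pr * c * pph + s * pph^2 + W / c^2) + A * pr * c * pph.
Proof. unfold d_r, J_c3, P1, rpow, Rpower, tan; closed_form. Qed.

Lemma d_pr_J_c3 : d_pr (J_c3 n k0 k1 k2) r ph pr pph = A * r * c * pph.
Proof. unfold d_pr, J_c3, P1, rpow, Rpower, tan; closed_form. Qed.

Lemma d_pphi_J_c3 : d_pphi (J_c3 n k0 k1 k2) r ph pr pph = A * r * pr * c + 2 * A * s * pph.
Proof. unfold d_pphi, J_c3, P1, rpow, Rpower, tan; closed_form. Qed.

Lemma d_phi_J_c3 : d_phi (J_c3 n k0 k1 k2) r ph pr pph =
  k * (- A * r * pr * s * pph + A * c * pph^2 + k0 * c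
       + A * ((2 * k1 * c + 2 * k2 * s * c) * c^2 + W * 2 * c * s) / c^4).
Proof. unfold d_phi, J_c3, P1, rpow, Rpower, tan; closed_form. Qed.

Lemma poisson_J_c2_H_nc2 : poisson (J_c2 n k1 k2) (H_nc2 n k0 k1 k2) r ph pr pph = 0.
Proof.
  unfold poisson.
  rewrite d_r_J_c2, d_pr_J_c2, d_pphi_J_c2, d_phi_J_c2, d_pphi_H_nc2, d_phi_H_nc2.
  field; exact cos_neq0.
Qed.

Lemma poisson_J_c3_H_nc2 : poisson (J_c3 n k0 k1 k2) (H_nc2 n k0 k1 k2) r ph pr pph = 0.
Proof.
  unfold poisson.
  rewrite d_r_J_c3, d_pr_J_c3, d_pphi_J_c3, d_phi_J_c3,
    d_r_H_nc2, d_pr_H_nc2, d_pphi_H_nc2, d_phi_H_nc2.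
  assert (c_neq0 : c <> 0) by exact cos_neq0.
  assert (r_neq0 : r <> 0) by lra.
  assert (pythagoras : s^2 + c^2 = 1).
  { transitivity (Rsqr s + Rsqr c); [unfold Rsqr; ring | apply sin2_cos2]. }
  assert (n_eq : n = k + 1) by (unfold k; ring).
  unfold W; clearbody A c s k; subst n.
  field_simplify_eq; auto.
  transitivity (- (k * A^3 * c * k2 * (r * pr * c + 2 * pph * s)) * (s^2 + c^2 - 1)).
  - ring.
  - rewrite pythagoras; ring.
Qed.

End PartialDerivatives.

Theorem mainTheorem8 (n k0 k1 k2 : R) :
  n <> 1 ->
  forall r ph pr pph : R,
    0 < r -> cos ((n - 1) * ph) <> 0 ->
    poisson (J_c2 n k1 k2) (H_nc2 n k0 k1 k2) r ph pr pph = 0 /\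
    poisson (J_c3 n k0 k1 k2) (H_nc2 n k0 k1 k2) r ph pr pph = 0.
Proof.
  intros _ r ph pr pph r_pos cos_neq0.
  split; [apply poisson_J_c2_H_nc2 | apply poisson_J_c3_H_nc2]; assumption.
Qed.
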